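(* Let $1\le p\le q$, $n=p+q$, and let $\mu=(a_1,\dots,a_p\mid b_1,\dots,b_q)\in\mathbb{Z}^n$ be $\Delta^+(\mathfrak{k},\mathfrak{t})$-dominant with $\mu-\beta$ also $\Delta^+(\mathfrak{k},\mathfrak{t})$-dominant. If $a_1\ge q+1$ and $b_1\ge p+1$, then $\{\mu-\tau\}\gg\{\mu-\tau-\beta\}$ for every $\tau\in\Omega_{p,q}$, and consequently $\|\mu\|_{\mathrm{spin}}>\|\mu-\beta\|_{\mathrm{spin}}$.
   Context: Weights are vectors in $\mathbb{R}^n$ written $(x_1,\dots,x_p\mid y_1,\dots,y_q)$, Euclidean norm $\|\cdot\|$. $\rho_c=(p,\dots,1\mid q,\dots,1)$, $\beta=(1,0,\dots,0\mid1,0,\dots,0)$. $\Delta^+(\mathfrak{k},\mathfrak{t})$-dominant means $x_1\ge\cdots\ge x_p\ge0$, $y_1\ge\cdots\ge y_q\ge0$. For $\nu\in\mathbb{Z}^n$, $\{\nu\}$ is obtained by taking absolute values of all coordinates and sorting the first $p$ and last $q$ coordinates separately in decreasing order; $\|\nu\|_{\mathfrak{k}}=\|\{\nu\}+\rho_c\|$. $u\gg v$ means $u_i\ge v_i$ for all $i$ with strict inequality for some $i$. $\Omega_{p,q}$ is the set of $(x\mid y)\in\mathbb{Z}^n$ with $q\ge x_1\ge\cdots\ge x_p\ge0$ and $y_j=\#\{i\mid q-x_i\ge j\}$ ($1\le j\le q$). $\|\nu\|_{\mathrm{spin}}=\min_{\tau\in\Omega_{p,q}}\|\nu-\tau\|_{\mathfrak{k}}$.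 *)

(* Weights in Z^n, n = p+q, are pairs (x, y) of integer
   sequences: x = first p coordinates, y = last q coordinates. *)
From HB Require Import structures.
From mathcomp Require Import all_boot all_order all_algebra.
Set Implicit Arguments. Unset Strict Implicit. Unset Printing Implicit Defensive.
Import Order.TTheory GRing.Theory Num.Theory.
Local Open Scope ring_scope.

Definition weight := (seq int * seq int)%type.

Definition vsub (s t : seq int) : seq int := [seq z.1 - z.2 | z <- zip s t].
Definition wsub (u v : weight) : weight := (vsub u.1 v.1, vsub u.2 v.2).
Definition vadd (s t : seq int) : seq int := [seq z.1 + z.2 | z <- zip s t].
Definition wadd (u v : weight) : weight := (vadd u.1 v.1, vadd u.2 v.2).

Definition rho_c (p q : nat) : weight :=
  ([seq (i%:Z) | i <- rev (iota 1 p)], [seq (i%:Z) | i <- rev (iota 1 q)]).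

Definition beta (p q : nat) : weight :=
  (1 :: nseq p.-1 0, 1 :: nseq q.-1 0).

Definition dominant_seq (s : seq int) : bool :=
  sorted (fun a b : int => b <= a) s && all (fun a : int => 0 <= a) s.
Definition dominant (u : weight) : bool := dominant_seq u.1 && dominant_seq u.2.

Definition sort_abs (s : seq int) : seq int :=
  sort (fun a b : int => b <= a) [seq (`|z|)%:Z | z <- s].
Definition brace (u : weight) : weight := (sort_abs u.1, sort_abs u.2).

Definition gg (u v : weight) : bool :=
  let s := u.1 ++ u.2 in let t := v.1 ++ v.2 in
  [&& size s == size t,
      all (fun z : int * int => z.2 <= z.1) (zip s t) &
      has (fun z : int * int => z.2 < z.1) (zip s t)].

Definition enorm (R : rcfType) (u : weight) : R :=
  Num.sqrt ((\sum_(z <- u.1 ++ u.2) z ^+ 2)%:~R).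

Definition knorm (R : rcfType) (p q : nat) (nu : weight) : R :=
  enorm R (wadd (brace nu) (rho_c p q)).

Definition omega_y (q : nat) (x : seq int) : seq int :=
  [seq (count (fun xi : int => j%:Z <= q%:Z - xi) x)%:Z | j <- iota 1 q].

Definition in_Omega (p q : nat) (tau : weight) : Prop :=
  [/\ size tau.1 = p,
      sorted (fun a b : int => b <= a) tau.1,
      all (fun a : int => (0 <= a) && (a <= q%:Z)) tau.1
    & tau.2 = omega_y q tau.1].

Definition tau_of (p q : nat) (x : p.-tuple 'I_q.+1) : weight :=
  let xs := [seq (val i)%:Z | i <- x] in (xs, omega_y q xs).

Definition tau0 (p q : nat) : weight :=
  (nseq p 0, omega_y q (nseq p 0)).

(* ||nu||_spin = min_{tau in Omega_{p,q}} ||nu - tau||_k, the minimum being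
   taken over the finite enumeration of Omega_{p,q} by nonincreasing
   x in {0..q}^p (tau0 is a member, so it is a harmless initial value). *)
Definition spin_norm (R : rcfType) (p q : nat) (nu : weight) : R :=
  \big[Num.min/knorm R p q (wsub nu (tau0 p q))]_(x : p.-tuple 'I_q.+1 |
      sorted (fun a b : 'I_q.+1 => (b <= a)%N) x)
    knorm R p q (wsub nu (tau_of x)).

(* For tau in Omega_{p,q} the first coordinate of each block of mu - tau is
   at least 1, because x_1 <= q and y_1 <= p.  Subtracting beta lowers these
   two positive entries by one, so after taking absolute values and sorting,
   the new sequence is obtained by inserting a smaller number into the same
   sorted list: it is coordinatewise below the old one and has a smaller sum.
   Adding the nonnegative rho_c keeps the entries nonnegative, so the
   k-norm drops strictly; evaluating at a tau minimising ||mu - tau||_k gives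
   the strict inequality of spin norms. *)
From HB Require Import structures.
From mathcomp Require Import all_boot all_order all_algebra.
From mathcomp Require Import zify ring lra.
Import Order.TTheory GRing.Theory Num.Theory.

Section InsertionSort.
Context {disp : Order.disp_t} {T : orderType disp}.
Local Open Scope order_scope.
Local Notation ge := (fun x y : T => y <= x).

Fixpoint insort (x : T) (s : seq T) : seq T :=
  if s is h :: t then (if h <= x then x :: s else h :: insort x t) else [:: x].

Lemma perm_insort x s : perm_eq (insort x s) (x :: s).
Proof.
elim: s => [|h t IH] //=; case: ifP => _ //.
apply: (perm_trans (_ : perm_eq _ (h :: x :: t))); first by rewrite perm_cons.
exact/permPl/(perm_catCA [:: h] [:: x] t).
Qed.

Lemma path_insort h x s : path ge h s -> x <= h -> path ge h (insort x s).
Proof.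
elim: s h => [|k t IH] h /=; first by rewrite andbT.
move=> /andP[kh kt] xh; case: leP => kx /=; first by rewrite xh kx.
by rewrite kh IH // ltW.
Qed.

Lemma sorted_insort x s : sorted ge s -> sorted ge (insort x s).
Proof.
case: s => [|k t] //= kt; case: leP => kx /=; first by rewrite kx.
by rewrite path_insort // ltW.
Qed.

Lemma sort_ge_cons x s : sort ge (x :: s) = insort x (sort ge s).
Proof.
have ge_total : total ge by move=> a b; apply: le_total.
have ge_trans : transitive ge by move=> a b c ba cb; apply: le_trans cb ba.
have ge_anti : antisymmetric ge by move=> a b; rewrite andbC => /le_anti.
apply: (sorted_eq ge_trans ge_anti).
- exact: sort_sorted.
- exact/sorted_insort/sort_sorted.
- rewrite perm_sort perm_sym (perm_trans (perm_insort _ _)) //.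
  by rewrite perm_cons perm_sort.
Qed.

Lemma all2_ge_refl s : all2 ge s s.
Proof. by elim: s => //= x s ->; rewrite lexx. Qed.

Lemma all2_insort_head h y s :
  path ge h s -> y <= h -> all2 ge (h :: s) (insort y s).
Proof.
elim: s h => [|k t IH] h /=; first by rewrite andbT.
move=> /andP[kh kt] yh; case: leP => ky /=.
  by rewrite yh lexx all2_ge_refl.
by rewrite kh /=; apply: IH => //; apply: ltW.
Qed.

Lemma all2_insort x y s :
  sorted ge s -> y <= x -> all2 ge (insort x s) (insort y s).
Proof.
elim: s => [|h t IH] /=; first by move=> _ ->.
move=> ht yx; case: (leP h y) => hy; case: (leP h x) => hx /=.
- by rewrite yx lexx all2_ge_refl.
- by move: (le_lt_trans hy (le_lt_trans yx hx)); rewrite ltxx.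
- by rewrite hx /=; apply: all2_insort_head => //; apply: ltW.
- by rewrite lexx IH // (path_sorted ht).
Qed.

End InsertionSort.

Section PointwiseDominance.
Variable R : realDomainType.
Local Open Scope ring_scope.
Local Notation ge := (fun x y : R => y <= x).
Local Notation shift w v := [seq z.1 + z.2 | z <- zip v w].
Local Notation sumsq s := (\sum_(z <- s) z ^+ 2).

Lemma has_lt_all2 u v : all2 ge u v -> \sum_(z <- v) z < \sum_(z <- u) z ->
  has (fun z : R * R => z.2 < z.1) (zip u v).
Proof.
elim: u v => [|x u IH] [|y v] //=; rewrite ?big_nil ?ltxx //.
move=> /andP[yx vu]; rewrite !big_cons; case: (ltP y x) => //= xy lt_sum.
apply: IH => //; rewrite -(ltrD2l x); apply: le_lt_trans lt_sum.
by rewrite lerD2r.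
Qed.

Lemma ler_sqr_shift (x y e : R) :
  0 <= y <= x -> 0 <= e -> (y + e) ^+ 2 <= (x + e) ^+ 2.
Proof. by move=> /andP[y0 yx] e0; rewrite !expr2; nra. Qed.

Lemma ltr_sqr_shift (x y e : R) :
  0 <= y < x -> 0 <= e -> (y + e) ^+ 2 < (x + e) ^+ 2.
Proof. by move=> /andP[y0 yx] e0; rewrite !expr2; nra. Qed.

Lemma ler_sumsq_shift u v w : all2 ge u v ->
  all (>= 0) v -> all (>= 0) w -> sumsq (shift w v) <= sumsq (shift w u).
Proof.
elim: u v w => [|x u IH] [|y v] [|e w] //=; rewrite ?big_nil //.
move=> /andP[yx vu] /andP[y0 v0] /andP[e0 w0]; rewrite !big_cons.
by rewrite lerD ?IH ?ler_sqr_shift ?y0.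
Qed.

Lemma ltr_sumsq_shift u v w : all2 ge u v ->
  \sum_(z <- v) z < \sum_(z <- u) z -> size w = size u ->
  all (>= 0) v -> all (>= 0) w -> sumsq (shift w v) < sumsq (shift w u).
Proof.
elim: u v w => [|x u IH] [|y v] [|e w] //=; rewrite ?big_nil ?ltxx //.
move=> /andP[yx vu] lt_sum [size_w] /andP[y0 v0] /andP[e0 w0].
move: lt_sum; rewrite !big_cons => lt_sum.
case: (ltP y x) => [lt_yx|le_xy].
  by rewrite ltr_leD ?ler_sumsq_shift ?ltr_sqr_shift ?y0.
rewrite ler_ltD ?ler_sqr_shift ?y0 ?IH //.
by rewrite -(ltrD2l x) (le_lt_trans _ lt_sum) // lerD2r.
Qed.

End PointwiseDominance.

Local Open Scope ring_scope.
Local Notation geZ := (fun a b : int => b <= a).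

Lemma size_vsub s t : size (vsub s t) = minn (size s) (size t).
Proof. by rewrite size_map size_zip. Qed.

Lemma vsub_nseq0 s : vsub s (nseq (size s) 0) = s.
Proof. by elim: s => //= x s IH; rewrite /vsub /= subr0; congr (_ :: _). Qed.

Lemma vsubAC s t u : vsub (vsub s t) u = vsub (vsub s u) t.
Proof.
elim: s t u => [|x s IH] [|y t] [|z u] //.
by rewrite /vsub /= -!/(vsub _ _) IH; congr (_ :: _); ring.
Qed.

Lemma wsubAC u v w : wsub (wsub u v) w = wsub (wsub u w) v.
Proof.
case: u v w => [u1 u2] [v1 v2] [w1 w2].
by rewrite /wsub /= vsubAC [vsub (vsub u2 _) _]vsubAC.
Qed.

Lemma size_sort_abs s : size (sort_abs s) = size s.
Proof. by rewrite size_sort size_map. Qed.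

Lemma sort_abs_ge0 s : all (>= 0) (sort_abs s).
Proof.
by rewrite /sort_abs (perm_all _ (permEl (perm_sort _ _))) all_map; apply/allP.
Qed.

Lemma sort_abs_cons c r : 0 <= c -> sort_abs (c :: r) = insort c (sort_abs r).
Proof. by move=> c0; rewrite /sort_abs /= abszE ger0_norm // sort_ge_cons. Qed.

Lemma sort_abs_sub_e1 s k : size s = k.+1 -> 1 <= head 0 s ->
  all2 geZ (sort_abs s) (sort_abs (vsub s (1 :: nseq k 0))) /\
  \sum_(z <- sort_abs (vsub s (1 :: nseq k 0))) z < \sum_(z <- sort_abs s) z.
Proof.
case: s => [|c r] //= [<-] c_ge1.
have -> : vsub (c :: r) (1 :: nseq (size r) 0) = (c - 1) :: r.
  by rewrite /vsub /= -/(vsub _ _) vsub_nseq0.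
have c0 : 0 <= c - 1 by rewrite subr_ge0.
rewrite !sort_abs_cons ?(le_trans c0) ?gerBl //.
have sorted_r : sorted geZ (sort_abs r) by apply: sort_sorted => x y; apply: le_total.
split; first by rewrite all2_insort ?gerBl.
by rewrite !(perm_big _ (perm_insort _ _)) !big_cons ltrD2r gtrBl.
Qed.

Lemma gg_all2 u1 u2 v1 v2 : all2 geZ u1 v1 -> all2 geZ u2 v2 ->
  \sum_(z <- v1) z < \sum_(z <- u1) z -> gg (u1, u2) (v1, v2).
Proof.
move=> le1 le2 lt_sum; move: (le1) (le2); rewrite !all2E.
move=> /andP[/eqP size1 all1] /andP[/eqP size2 all2].
rewrite /gg /= !size_cat size1 size2 eqxx zip_cat // all_cat all1 all2.
by rewrite has_cat has_lt_all2.
Qed.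

Lemma size_rho_block k : size [seq i%:Z | i <- rev (iota 1 k)] = k.
Proof. by rewrite size_map size_rev size_iota. Qed.

Lemma rho_block_ge0 k : all (>= 0) [seq i%:Z | i <- rev (iota 1 k)].
Proof. by rewrite all_map; apply/allP. Qed.

Section SubBeta.
Variables (p q : nat) (nu : weight).
Hypotheses (p_gt0 : (0 < p)%N) (q_gt0 : (0 < q)%N).
Hypotheses (size_nu1 : size nu.1 = p) (size_nu2 : size nu.2 = q).
Hypotheses (head_nu1 : 1 <= head 0 nu.1) (head_nu2 : 1 <= head 0 nu.2).

Let size_nu1S : size nu.1 = p.-1.+1. Proof. by rewrite prednK. Qed.
Let size_nu2S : size nu.2 = q.-1.+1. Proof. by rewrite prednK. Qed.

Lemma gg_brace_sub_beta : gg (brace nu) (brace (wsub nu (beta p q))).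
Proof.
have [le1 lt1] := sort_abs_sub_e1 _ _ size_nu1S head_nu1.
have [le2 _] := sort_abs_sub_e1 _ _ size_nu2S head_nu2.
exact: gg_all2.
Qed.

Lemma knorm_sub_beta_lt (R : rcfType) :
  knorm R p q (wsub nu (beta p q)) < knorm R p q nu.
Proof.
have [le1 lt1] := sort_abs_sub_e1 _ _ size_nu1S head_nu1.
have [le2 lt2] := sort_abs_sub_e1 _ _ size_nu2S head_nu2.
have rho1 : size (rho_c p q).1 = size (sort_abs nu.1).
  by rewrite size_sort_abs size_nu1 size_rho_block.
have rho2 : size (rho_c p q).2 = size (sort_abs nu.2).
  by rewrite size_sort_abs size_nu2 size_rho_block.
have lt_sumsq := ltrD
  (ltr_sumsq_shift _ _ _ _ le1 lt1 rho1 (sort_abs_ge0 _) (rho_block_ge0 p))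
  (ltr_sumsq_shift _ _ _ _ le2 lt2 rho2 (sort_abs_ge0 _) (rho_block_ge0 q)).
rewrite /knorm /enorm /= !big_cat /= ltr_sqrt ?ltr_int //.
rewrite ltr0z (le_lt_trans _ lt_sumsq) // addr_ge0 //.
  by apply: sumr_ge0 => z _; apply: sqr_ge0.
by apply: sumr_ge0 => z _; apply: sqr_ge0.
Qed.

End SubBeta.

Lemma head_vsub_Omega p q a tau : (0 < p)%N -> in_Omega p q tau ->
  size a = p -> (q.+1)%:Z <= nth 0 a 0 -> 1 <= head 0 (vsub a tau.1).
Proof.
move=> p_gt0 [size_x _ x_bounded _]; case: a => [|a1 a] /=.
  by move=> size0; rewrite -size0 in p_gt0.
move=> _ a1_ge; case: tau.1 size_x x_bounded => [|x1 x] /=.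
  by move=> size0; rewrite -size0 in p_gt0.
by move=> _ /andP[/andP[_ x1_le] _]; rewrite lerBrDr (le_trans _ a1_ge) //; lia.
Qed.

Lemma head_vsub_omega_y p q b x : (0 < q)%N -> size b = q -> size x = p ->
  (p.+1)%:Z <= nth 0 b 0 -> 1 <= head 0 (vsub b (omega_y q x)).
Proof.
case: q => [|q] // _; case: b => [|b1 b] //= _ size_x b1_ge.
rewrite lerBrDr (le_trans _ b1_ge) //.
set c := count _ x; have : (c <= size x)%N := count_size _ _.
by rewrite size_x; lia.
Qed.

Lemma wsub_Omega p q a b tau : (0 < p)%N -> (0 < q)%N ->
  size a = p -> size b = q -> (q.+1)%:Z <= nth 0 a 0 -> (p.+1)%:Z <= nth 0 b 0 ->
  in_Omega p q tau ->
  let nu := wsub (a, b) tau in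
  [/\ size nu.1 = p, size nu.2 = q, 1 <= head 0 nu.1 & 1 <= head 0 nu.2].
Proof.
move=> p_gt0 q_gt0 size_a size_b a1_ge b1_ge tau_Omega.
have [size_x _ _ tau2] := tau_Omega.
split=> /=; rewrite ?tau2 ?size_vsub ?size_a ?size_b ?size_x ?size_map ?size_iota
  ?minnn //.
- exact: head_vsub_Omega tau_Omega size_a a1_ge.
- exact: head_vsub_omega_y q_gt0 size_b size_x b1_ge.
Qed.

Lemma in_Omega_tau0 p q : in_Omega p q (tau0 p q).
Proof.
split=> /=; first by rewrite size_nseq.
- by case: p => //= p; elim: p => //= p ->; rewrite lexx.
- by rewrite all_nseq lexx orbT.
- by [].
Qed.

Lemma in_Omega_tau_of p q (x : p.-tuple 'I_q.+1) :
  sorted (fun i j : 'I_q.+1 => (j <= i)%N) x -> in_Omega p q (tau_of x).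
Proof.
move=> sorted_x; split=> //=.
- by rewrite size_map size_tuple.
- by rewrite sorted_map; apply: sub_sorted sorted_x => i j /=; rewrite lez_nat.
- by rewrite all_map; apply/allP => i _ /=; rewrite lez_nat -ltnS ltn_ord.
Qed.

Lemma spin_norm_attained (R : rcfType) p q nu : exists2 tau, in_Omega p q tau &
  spin_norm R p q nu = knorm R p q (wsub nu tau) /\
  forall nu', spin_norm R p q nu' <= knorm R p q (wsub nu' tau).
Proof.
pose attained v := exists2 tau, in_Omega p q tau & v = knorm R p q (wsub nu tau) /\
  forall nu', spin_norm R p q nu' <= knorm R p q (wsub nu' tau).
rewrite -/(attained _) {1}/spin_norm; apply: big_ind.
- exists (tau0 p q); first exact: in_Omega_tau0.
  by split=> // nu'; apply: bigmin_le_id.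
- move=> _ _ [t1 Ht1 [-> le1]] [t2 Ht2 [-> le2]].
  by case: leP => _; [exists t1 | exists t2].
- move=> x sorted_x; exists (tau_of x); first exact: in_Omega_tau_of.
  by split=> // nu'; apply: bigmin_le_cond.
Qed.

Theorem mainTheorem10 (R : rcfType) (p q : nat) (a b : seq int) :
  (1 <= p)%N -> (p <= q)%N -> size a = p -> size b = q ->
  dominant (a, b) ->
  dominant (wsub (a, b) (beta p q)) ->
  (q.+1)%:Z <= nth 0 a 0 ->
  (p.+1)%:Z <= nth 0 b 0 ->
  (forall tau : weight, in_Omega p q tau ->
     gg (brace (wsub (a, b) tau)) (brace (wsub (wsub (a, b) tau) (beta p q))))
  /\ spin_norm R p q (wsub (a, b) (beta p q)) < spin_norm R p q (a, b).
Proof.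
move=> p_gt0 le_pq size_a size_b _ _ a1_ge b1_ge.
have q_gt0 : (0 < q)%N := leq_trans p_gt0 le_pq.
have Omega_hyps tau :=
  wsub_Omega p q a b tau p_gt0 q_gt0 size_a size_b a1_ge b1_ge.
split=> [tau /Omega_hyps[size1 size2 head1 head2] | ].
  exact: gg_brace_sub_beta.
have [tau tau_Omega [-> le_spin]] := spin_norm_attained R p q (a, b).
have [size1 size2 head1 head2] := Omega_hyps tau tau_Omega.
rewrite (le_lt_trans (le_spin _)) // wsubAC.
exact: knorm_sub_beta_lt.
Qed.
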